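(* For $\mu\in M(\mathbb{T})$: $\mu$ is spectrally reasonable if and only if $T_{m}\mu$ is spectrally reasonable for every $m\in\mathbb{Z}$.
   Context: $\mathbb{T}=\mathbb{R}/2\pi\mathbb{Z}$; $M(\mathbb{T})$ is the convolution Banach algebra of complex regular Borel measures on $\mathbb{T}$; $\sigma(\mu)$ is the spectrum in $M(\mathbb{T})$, $\widehat{\mu}(n)=\int e^{-int}d\mu(t)$. $\mathscr{N}$ is the set of $\mu$ with $\sigma(\mu)=\overline{\{\widehat{\mu}(n):n\in\mathbb{Z}\}}$; $\mu$ is spectrally reasonable if $\mu+\nu\in\mathscr{N}$ for every $\nu\in\mathscr{N}$. For $m\in\mathbb{Z}$, $T_m:M(\mathbb{T})\to M(\mathbb{T})$ is defined by $d(T_m\mu)(t)=e^{imt}d\mu(t)$, equivalently $\widehat{T_m\mu}(n)=\widehat{\mu}(n-m)$ for all $n\in\mathbb{Z}$. *)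

From HB Require Import structures.
From mathcomp Require Import all_boot all_order all_algebra.
From mathcomp Require Import complex.
From mathcomp Require Import all_classical all_reals all_analysis.

Set Implicit Arguments.
Unset Strict Implicit.
Unset Printing Implicit Defensive.

Import Order.TTheory GRing.Theory Num.Theory.
Import numFieldTopology.Exports numFieldNormedType.Exports.

Local Open Scope classical_set_scope.
Local Open Scope ring_scope.
Local Open Scope complex_scope.

(* Model of M(T), T = R/2piZ identified with [0, 2pi[.
   A complex regular Borel measure on T is represented by a finite list of
   "atoms" (rho, h): rho a finite positive Borel measure on R concentrated on
   [0, 2pi[, and h : R -> C a rho-integrable density; the atom stands for the
   complex measure h d rho and the list for the sum of its atoms.  Every complex
   Borel measure on T arises this way (e.g. one atom with rho = |mu| and
   h = d mu / d|mu|), and sums of measures are concatenations of lists.  All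
   notions below only depend on the represented set function. *)

Section MeasureAlgebra.
Variable R : realType.
Local Notation C := R[i].

Record atom := Atom {
  a_meas : {finite_measure set R -> \bar R};
  a_dens : R -> C }.

Definition cmeasure := seq atom.

Definition atom_wf (a : atom) : Prop :=
  [/\ a_meas a (~` `[0, 2 * pi[) = 0%E,
      (a_meas a).-integrable setT (fun x => (complex.Re (a_dens a x))%:E) &
      (a_meas a).-integrable setT (fun x => (complex.Im (a_dens a x))%:E)].

Definition cm_wf (mu : cmeasure) : Prop :=
  foldr (fun a P => atom_wf a /\ P) True mu.

Definition cint (rho : {finite_measure set R -> \bar R}) (f : R -> C) : C :=
  (Rintegral rho setT (fun x => complex.Re (f x)))
    +i* (Rintegral rho setT (fun x => complex.Im (f x))).

Definition cm_val (mu : cmeasure) (A : set R) : C :=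
  \sum_(a <- mu) cint (a_meas a) (fun x => a_dens a x * (x \in A)%:R).

Definition expi (t : R) : C := cos t +i* sin t.

Definition fourier (mu : cmeasure) (n : int) : C :=
  \sum_(a <- mu) cint (a_meas a) (fun t => a_dens a t * expi (- (n%:~R * t))).

Definition addT (x t : R) : R :=
  if x + t < 2 * pi then x + t else x + t - 2 * pi.

Definition conv_val (mu nu : cmeasure) (A : set R) : C :=
  \sum_(a <- mu) \sum_(b <- nu)
    cint (a_meas a) (fun x => a_dens a x *
      cint (a_meas b) (fun t => a_dens b t * (addT x t \in A)%:R)).

Definition delta0 : cmeasure := [:: Atom (\d_(0 : R)) (fun _ => 1)].

Definition cm_scale (c : C) (mu : cmeasure) : cmeasure :=
  map (fun a => Atom (a_meas a) (fun x => c * a_dens a x)) mu.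

Definition cm_invertible (mu : cmeasure) : Prop :=
  exists nu, cm_wf nu /\
    forall A, measurable A -> conv_val mu nu A = cm_val delta0 A.

Definition spectrum (mu : cmeasure) : set C^o :=
  [set lam | ~ cm_invertible (mu ++ cm_scale (- lam) delta0)].

Definition inN (mu : cmeasure) : Prop :=
  spectrum mu = closure (range (fourier mu) : set C^o).

Definition spectrally_reasonable (mu : cmeasure) : Prop :=
  forall nu, cm_wf nu -> inN nu -> inN (mu ++ nu).

Definition Tm (m : int) (mu : cmeasure) : cmeasure :=
  map (fun a => Atom (a_meas a) (fun t => expi (m%:~R * t) * a_dens a t)) mu.

End MeasureAlgebra.

From HB Require Import structures.
From mathcomp Require Import all_boot all_order all_algebra.
From mathcomp Require Import complex.
From mathcomp Require Import all_classical all_reals all_analysis.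
From mathcomp Require Import measurable_realfun.
From mathcomp Require Import ring lra.

(** Since [e^{im(x+t)} = e^{imx} e^{imt}] (also for addition modulo [2 pi]),
  [T_m] is multiplicative for convolution; it fixes [lambda delta_0], so it
  maps inverses of [mu - lambda delta_0] to inverses of
  [T_m mu - lambda delta_0], and [T_{-m}] undoes it: [T_m] preserves spectra.
  It also shifts Fourier coefficients, so it preserves the set of Fourier
  coefficients, hence the class [N].  Being additive with inverse [T_{-m}], it
  then preserves spectral reasonableness.
  Multiplicativity needs [int f d(mu * nu) = f 0] for the bounded measurable
  [f(s) = e^{ims} 1_A(s)] when [mu * nu = delta_0] is only known on sets;
  this follows by uniform approximation of [f] with step functions. *)

Set Implicit Arguments.
Unset Strict Implicit.
Unset Printing Implicit Defensive.
Import Order.TTheory GRing.Theory Num.Theory.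
Import numFieldTopology.Exports numFieldNormedType.Exports.
Local Open Scope classical_set_scope.
Local Open Scope ring_scope.
Local Open Scope complex_scope.
Local Notation measurable_funD := measurable_realfun.measurable_funD.
Local Notation measurable_funB := measurable_realfun.measurable_funB.
Local Notation measurable_funM := measurable_realfun.measurable_funM.

Section TwistAlgebra.
Variable R : realType.

Lemma expiD (a b : R) : expi (a + b) = expi a * expi b.
Proof.
rewrite /expi cosD sinD; apply/eqP; rewrite eq_complex /=; apply/andP; split;
  apply/eqP; ring.
Qed.

Lemma expi0 : expi (0 : R) = 1.
Proof. by rewrite /expi cos0 sin0. Qed.

Lemma expiNr (a : R) : expi (- a) * expi a = 1.
Proof. by rewrite -expiD addNr expi0. Qed.

Lemma expi_nat2pi (n : nat) : expi (n%:R * (2 * pi) : R) = 1.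
Proof.
elim: n => [|n IHn]; first by rewrite mul0r expi0.
by rewrite -addn1 natrD mulrDl expiD IHn !mul1r /expi mulr_natl cos2pi sin2pi.
Qed.

Lemma expi_int2pi (m : int) : expi (m%:~R * (2 * pi) : R) = 1.
Proof.
case: m => n; first by rewrite pmulrn expi_nat2pi.
rewrite NegzE mulrNz mulNr.
by have := expiNr (n.+1%:R * (2 * pi)); rewrite -pmulrn expi_nat2pi mulr1.
Qed.

Lemma expi_addT (m : int) (x t : R) :
  expi (m%:~R * addT x t) = expi (m%:~R * x) * expi (m%:~R * t).
Proof.
rewrite /addT; case: ifP => _; first by rewrite mulrDr expiD.
rewrite mulrBr expiD.
have := expiNr (m%:~R * (2 * pi)); rewrite expi_int2pi mulr1 => ->.
by rewrite mulr1 mulrDr expiD.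
Qed.

Lemma Tm_cat m (mu nu : cmeasure R) : Tm m (mu ++ nu) = Tm m mu ++ Tm m nu.
Proof. exact: map_cat. Qed.

Lemma Tm0 (mu : cmeasure R) : Tm 0 mu = mu.
Proof.
elim: mu => [|[rho h] mu IHmu] //=; rewrite IHmu; congr (Atom _ _ :: _).
by apply: funext => t; rewrite mul0r expi0 mul1r.
Qed.

Lemma TmK m (mu : cmeasure R) : Tm (- m) (Tm m mu) = mu.
Proof.
elim: mu => [|[rho h] mu IHmu] //=; rewrite IHmu; congr (Atom _ _ :: _).
apply: funext => t; rewrite mulrA -[(- m)%:~R]/(intmul 1 (- m)).
by rewrite mulrNz mulNr expiNr mul1r.
Qed.

Lemma TmNK m (mu : cmeasure R) : Tm m (Tm (- m) mu) = mu.
Proof. by rewrite -{1}(opprK m) TmK. Qed.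

Lemma fourier_Tm m (mu : cmeasure R) n : fourier (Tm m mu) n = fourier mu (n - m).
Proof.
rewrite /fourier /Tm big_map; apply: eq_bigr => [[rho h]] _ /=.
congr cint; apply: funext => t.
rewrite [_ * h t]mulrC -mulrA -expiD; congr (_ * expi _).
by rewrite intrB; ring.
Qed.

Lemma range_fourier_Tm m (mu : cmeasure R) :
  range (fourier (Tm m mu)) = range (fourier mu).
Proof.
apply/seteqP; split => z [n _ <-].
  by exists (n - m) => //; rewrite fourier_Tm.
by exists (n + m) => //; rewrite fourier_Tm addrK.
Qed.

End TwistAlgebra.

Section ComplexIntegral.
Variable R : realType.
Local Notation C := R[i].
Local Notation Re := (@complex.Re R).
Local Notation Im := (@complex.Im R).
Implicit Types (rho : {finite_measure set R -> \bar R}) (f h u v : R -> C).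

Lemma Re_mul (x y : C) : Re (x * y) = Re x * Re y - Im x * Im y.
Proof. by case: x => a b; case: y => c d. Qed.

Lemma Im_mul (x y : C) : Im (x * y) = Re x * Im y + Im x * Re y.
Proof. by case: x => a b; case: y => c d /=; rewrite addrC. Qed.

Lemma Re_add (x y : C) : Re (x + y) = Re x + Re y.
Proof. by case: x => a b; case: y => c d. Qed.

Lemma Im_add (x y : C) : Im (x + y) = Im x + Im y.
Proof. by case: x => a b; case: y => c d. Qed.

Lemma Re_sum (T : Type) (s : seq T) (F : T -> C) :
  Re (\sum_(a <- s) F a) = \sum_(a <- s) Re (F a).
Proof. by elim: s => [|a s IHs]; rewrite ?big_nil ?big_cons ?Re_add ?IHs. Qed.

Lemma Im_sum (T : Type) (s : seq T) (F : T -> C) :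
  Im (\sum_(a <- s) F a) = \sum_(a <- s) Im (F a).
Proof. by elim: s => [|a s IHs]; rewrite ?big_nil ?big_cons ?Im_add ?IHs. Qed.

Definition cbounded u (M : R) := forall x, `|Re (u x)| <= M /\ `|Im (u x)| <= M.

Definition cbmeasurable u :=
  [/\ measurable_fun setT (fun x => Re (u x)),
      measurable_fun setT (fun x => Im (u x)) & exists M, cbounded u M].

Definition cintegrable rho f :=
  rho.-integrable setT (fun x => (Re (f x))%:E) /\
  rho.-integrable setT (fun x => (Im (f x))%:E).

Definition cnorm1 rho h := Rintegral rho setT (fun x => `|Re (h x)| + `|Im (h x)|).

Lemma cbmeasurableD u v : cbmeasurable u -> cbmeasurable v ->
  cbmeasurable (fun x => u x + v x).
Proof.
move=> [mu1 mu2 [M HM]] [mv1 mv2 [N HN]]; split.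
- by under eq_fun do rewrite Re_add; exact: measurable_funD.
- by under eq_fun do rewrite Im_add; exact: measurable_funD.
exists (M + N) => x; rewrite Re_add Im_add.
have [h1 h2] := HM x; have [h3 h4] := HN x.
by split; apply: le_trans (ler_normD _ _) _; apply: lerD.
Qed.

Lemma cbmeasurableM u v : cbmeasurable u -> cbmeasurable v ->
  cbmeasurable (fun x => u x * v x).
Proof.
move=> [mu1 mu2 [M HM]] [mv1 mv2 [N HN]]; split.
- by under eq_fun do rewrite Re_mul; apply: measurable_funB; exact: measurable_funM.
- by under eq_fun do rewrite Im_mul; apply: measurable_funD; exact: measurable_funM.
exists (M * N + M * N) => x; rewrite Re_mul Im_mul.
have [h1 h2] := HM x; have [h3 h4] := HN x.
have M0 : 0 <= M by apply: le_trans h1.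
have N0 : 0 <= N by apply: le_trans h3.
split; apply: le_trans (ler_normB _ _) _ || apply: le_trans (ler_normD _ _) _;
  apply: lerD; rewrite normrM; exact: ler_pM.
Qed.

Lemma cbmeasurable_cst (c : C) : cbmeasurable (fun _ => c).
Proof.
split; [exact: measurable_cst|exact: measurable_cst|].
by exists (`|Re c| + `|Im c|) => x; split; rewrite ?lerDl ?lerDr.
Qed.

Lemma cbmeasurable_comp u (phi : R -> R) : cbmeasurable u ->
  measurable_fun setT phi -> cbmeasurable (fun x => u (phi x)).
Proof.
move=> [m1 m2 [M HM]] mphi; split.
- exact: measurableT_comp m1 mphi.
- exact: measurableT_comp m2 mphi.
by exists M => x; exact: HM.
Qed.

Lemma cbmeasurable_real (g : R -> R) (M : R) : measurable_fun setT g ->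
  (forall s, `|g s| <= M) -> cbmeasurable (fun s => (g s)%:C).
Proof.
move=> mg hg; have M0 : 0 <= M by apply: le_trans (hg 0).
split; [exact: mg|exact: measurable_cst|].
by exists M => s /=; rewrite normr0 M0 hg.
Qed.

Lemma cbmeasurable_sum (K : nat) (F : nat -> R -> C) :
  (forall j, cbmeasurable (F j)) -> cbmeasurable (fun s => \sum_(0 <= j < K) F j s).
Proof.
move=> mF; elim: K => [|K IHK].
  under eq_fun do rewrite big_nil; exact: cbmeasurable_cst.
under eq_fun do rewrite big_nat_recr //=; exact: cbmeasurableD.
Qed.

Definition cindic (A : set R) : R -> C := fun s => (s \in A)%:R.

Lemma cbmeasurable_indic (A : set R) : measurable A -> cbmeasurable (cindic A).
Proof.
have ReI (b : bool) : Re b%:R = b%:R by case: b.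
have ImI (b : bool) : Im b%:R = 0 by case: b.
move=> mA; split.
- rewrite (_ : (fun x => _) = \1_A); first exact: measurable_indic.
  by apply: funext => s; rewrite /cindic ReI indicE.
- by under eq_fun do rewrite /cindic ImI; exact: measurable_cst.
- exists 1 => s; rewrite /cindic ReI ImI normr0 ler01.
  by case: (s \in A); rewrite /= ?normr1 ?normr0.
Qed.

Lemma cintegrable_measurable rho h : cintegrable rho h ->
  measurable_fun setT (fun x => Re (h x)) /\ measurable_fun setT (fun x => Im (h x)).
Proof.
by move=> [i1 i2]; split; apply/measurable_EFinP;
  [exact: measurable_int _ i1|exact: measurable_int _ i2].
Qed.

Lemma bounded_setT (T : Type) (f : T -> R) (M : R) : (forall x, `|f x| <= M) ->
  [bounded f x | x in setT].
Proof.
move=> fM; exists M; split; first by rewrite num_real.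
by move=> M' MM' x _; apply: le_trans (fM x) (ltW MM').
Qed.

Lemma integrableZl_fun rho (k : R) (f : R -> R) :
  rho.-integrable setT (fun x => (f x)%:E) ->
  rho.-integrable setT (EFin \o (fun x => k * f x)).
Proof.
move=> fi; apply: (eq_integrable measurableT _ _ _ (integrableZl measurableT k fi)).
by move=> x _ /=; rewrite EFinM.
Qed.

Lemma cintegrableM rho h u : cintegrable rho h -> cbmeasurable u ->
  cintegrable rho (fun x => h x * u x).
Proof.
move=> [i1 i2] [m1 m2 [M HM]].
have b1 : [bounded Re (u x) | x in setT].
  by apply: (@bounded_setT _ _ M) => x; case: (HM x).
have b2 : [bounded Im (u x) | x in setT].
  by apply: (@bounded_setT _ _ M) => x; case: (HM x).
split.
- have iB : rho.-integrable setT
      (((fun x => (Re (h x))%:E) \* (EFin \o (fun x => Re (u x))))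
     \- ((fun x => (Im (h x))%:E) \* (EFin \o (fun x => Im (u x)))))%E.
    by apply: integrableB => //; apply: integrableMl.
  apply: (eq_integrable measurableT _ _ _ iB) => x _ /=.
  by rewrite Re_mul EFinB !EFinM.
- have iD : rho.-integrable setT
      (((fun x => (Re (h x))%:E) \* (EFin \o (fun x => Im (u x))))
     \+ ((fun x => (Im (h x))%:E) \* (EFin \o (fun x => Re (u x)))))%E.
    by apply: integrableD => //; apply: integrableMl.
  apply: (eq_integrable measurableT _ _ _ iD) => x _ /=.
  by rewrite Im_mul EFinD !EFinM.
Qed.

Lemma cintD rho f h : cintegrable rho f -> cintegrable rho h ->
  cint rho (fun x => f x + h x) = cint rho f + cint rho h.
Proof.
move=> [f1 f2] [h1 h2]; rewrite /cint.
under eq_Rintegral do rewrite Re_add.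
under [X in _ +i* X]eq_Rintegral do rewrite Im_add.
by rewrite !RintegralD.
Qed.

Lemma cintZ rho f (c : C) : cintegrable rho f ->
  cint rho (fun x => c * f x) = c * cint rho f.
Proof.
move=> [f1 f2]; rewrite /cint.
under eq_Rintegral do rewrite Re_mul.
under [X in _ +i* X]eq_Rintegral do rewrite Im_mul.
rewrite RintegralB ?RintegralD ?RintegralZl //; try exact: integrableZl_fun.
by case: c => a b.
Qed.

Lemma cint_dirac (a : R) f : cbmeasurable f ->
  cint (\d_a : {finite_measure set R -> \bar R}) f = f a.
Proof.
move=> [m1 m2 _]; rewrite /cint /Rintegral.
rewrite !integral_dirac //=; try exact/measurable_EFinP.
by rewrite indicE mem_set // !mul1r; case: (f a).
Qed.

Lemma cnorm1_ge0 rho h : 0 <= cnorm1 rho h.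
Proof. by apply: Rintegral_ge0 => x _; rewrite addr_ge0. Qed.

Lemma integrable_cnorm1 rho h : cintegrable rho h ->
  rho.-integrable setT (fun x => (`|Re (h x)| + `|Im (h x)|)%:E).
Proof.
move=> [i1 i2].
apply: (eq_integrable measurableT _ _ _
  (integrableD measurableT (integrable_abse i1) (integrable_abse i2))).
by move=> x _ /=; rewrite EFinD.
Qed.

Lemma cint_bound rho h u M : cintegrable rho h -> cbmeasurable u -> cbounded u M ->
  cbounded (fun=> cint rho (fun x => h x * u x)) (M * cnorm1 rho h).
Proof.
move=> ih mu bu _; have [i1 i2] := cintegrableM ih mu.
have iM : rho.-integrable setT
    (EFin \o (fun x => M * (`|Re (h x)| + `|Im (h x)|))).
  exact/integrableZl_fun/integrable_cnorm1.
have iK := integrable_cnorm1 ih.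
rewrite /cnorm1 -RintegralZl //; split.
- apply: le_trans (le_normr_Rintegral measurableT i1) _.
  apply: le_Rintegral => //; first exact: integrable_abse i1.
  move=> x _; rewrite Re_mul; have [b1 b2] := bu x.
  apply: le_trans (ler_normB _ _) _; rewrite !normrM mulrDr.
  by apply: lerD; rewrite mulrC; apply: ler_wpM2r.
- apply: le_trans (le_normr_Rintegral measurableT i2) _.
  apply: le_Rintegral => //; first exact: integrable_abse i2.
  move=> x _; rewrite Im_mul; have [b1 b2] := bu x.
  apply: le_trans (ler_normD _ _) _; rewrite !normrM mulrDr.
  by apply: lerD; rewrite mulrC; apply: ler_wpM2r.
Qed.

Lemma measurable_Rintegral_snd rho (f : R * R -> R) :
  measurable_fun setT f ->
  measurable_fun setT (fun x => Rintegral rho setT (fun t => f (x, t))).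
Proof.
move=> mf; pose g p := (f p)%:E.
have mg : measurable_fun setT g by exact/measurable_EFinP.
rewrite [X in measurable_fun _ X](_ : _ = fine \o
   (fubini_F rho g^\+ \- fubini_F rho g^\-)%E); last first.
  apply: funext => x; rewrite /Rintegral integralE /fubini_F /=.
  by congr (fine (_ - _)); apply: eq_integral => y _; rewrite ?funeposE ?funenegE.
apply: measurableT_comp (fine_measurable measurableT) _.
apply: emeasurable_funB.
- apply: measurable_fun_fubini_tonelli_F; first exact: measurable_funepos.
  by move=> z; exact: funepos_ge0.
- apply: measurable_fun_fubini_tonelli_F; first exact: measurable_funeneg.
  by move=> z; exact: funeneg_ge0.
Qed.

End ComplexIntegral.

Section ConvolutionIntegral.
Variable R : realType.
Local Notation C := R[i].
Local Notation Re := (@complex.Re R).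
Local Notation Im := (@complex.Im R).
Implicit Types (X Y : cmeasure R) (a b : atom R) (G : R -> C).

Lemma measurable_addT_pair : measurable_fun setT (fun p : R * R => addT p.1 p.2).
Proof.
have ms : measurable_fun setT (fun p : R * R => p.1 + p.2).
  by apply: measurable_funD; [exact: measurable_fst|exact: measurable_snd].
apply: (@measurable_fun_ifT _ _ _ _ (fun p : R * R => p.1 + p.2)
  (fun p => p.1 + p.2 - 2 * pi) (fun p => p.1 + p.2 < 2 * pi)) => //.
- by apply: measurable_fun_ltr => //; exact: measurable_cst.
- by apply: measurable_funB => //; exact: measurable_cst.
Qed.

Lemma measurable_addT x : measurable_fun setT (@addT R x).
Proof. exact: measurableT_comp measurable_addT_pair (pair1_measurable x). Qed.

Lemma cbmeasurable_addT G x : cbmeasurable G -> cbmeasurable (fun t => G (addT x t)).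
Proof. by move=> mG; apply: cbmeasurable_comp mG (measurable_addT x). Qed.

Lemma atom_cintegrable a : atom_wf a -> cintegrable (a_meas a) (a_dens a).
Proof. by case. Qed.

Definition shift_cint b G (x : R) :=
  cint (a_meas b) (fun t => a_dens b t * G (addT x t)).

Definition atom_conv_cint a b G :=
  cint (a_meas a) (fun x => a_dens a x * shift_cint b G x).

(* [conv_val X Y A] is [conv_cint X Y (cindic A)] by conversion. *)
Definition conv_cint X Y G := \sum_(a <- X) \sum_(b <- Y) atom_conv_cint a b G.

Definition conv_mass X Y := \sum_(a <- X) \sum_(b <- Y)
  (cnorm1 (a_meas b) (a_dens b) * cnorm1 (a_meas a) (a_dens a)).

Lemma measurable_shift_cint_Re b G : cintegrable (a_meas b) (a_dens b) ->
  cbmeasurable G -> measurable_fun setT (fun x => Re (shift_cint b G x)).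
Proof.
move=> ib [mG1 mG2 _]; have [mh1 mh2] := cintegrable_measurable ib.
have mGT (F : C -> R) : measurable_fun setT (fun x => F (G x)) ->
    measurable_fun setT (fun p : R * R => F (G (addT p.1 p.2))).
  by move=> mFG; exact: measurableT_comp mFG measurable_addT_pair.
apply: (@measurable_Rintegral_snd R (a_meas b)
  (fun p : R * R => Re (a_dens b p.2 * G (addT p.1 p.2)))).
under eq_fun do rewrite Re_mul.
apply: measurable_funB; apply: measurable_funM.
- exact: measurableT_comp mh1 measurable_snd.
- exact: mGT.
- exact: measurableT_comp mh2 measurable_snd.
- exact: mGT.
Qed.

Lemma measurable_shift_cint_Im b G : cintegrable (a_meas b) (a_dens b) ->
  cbmeasurable G -> measurable_fun setT (fun x => Im (shift_cint b G x)).
Proof.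
move=> ib [mG1 mG2 _]; have [mh1 mh2] := cintegrable_measurable ib.
have mGT (F : C -> R) : measurable_fun setT (fun x => F (G x)) ->
    measurable_fun setT (fun p : R * R => F (G (addT p.1 p.2))).
  by move=> mFG; exact: measurableT_comp mFG measurable_addT_pair.
apply: (@measurable_Rintegral_snd R (a_meas b)
  (fun p : R * R => Im (a_dens b p.2 * G (addT p.1 p.2)))).
under eq_fun do rewrite Im_mul.
apply: measurable_funD; apply: measurable_funM.
- exact: measurableT_comp mh1 measurable_snd.
- exact: mGT.
- exact: measurableT_comp mh2 measurable_snd.
- exact: mGT.
Qed.

Lemma shift_cint_bound b G M : cintegrable (a_meas b) (a_dens b) ->
  cbmeasurable G -> cbounded G M ->
  cbounded (shift_cint b G) (M * cnorm1 (a_meas b) (a_dens b)).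
Proof.
move=> ib mG bG x.
by apply: (cint_bound ib (cbmeasurable_addT x mG)) => // t; exact: bG.
Qed.

Lemma cbmeasurable_shift_cint b G : cintegrable (a_meas b) (a_dens b) ->
  cbmeasurable G -> cbmeasurable (shift_cint b G).
Proof.
move=> ib mG; have [_ _ [M bG]] := mG; split.
- exact: measurable_shift_cint_Re.
- exact: measurable_shift_cint_Im.
- by exists (M * cnorm1 (a_meas b) (a_dens b)); exact: shift_cint_bound.
Qed.

Lemma shift_cintD b G1 G2 : cintegrable (a_meas b) (a_dens b) ->
  cbmeasurable G1 -> cbmeasurable G2 ->
  shift_cint b (fun s => G1 s + G2 s) = (fun x => shift_cint b G1 x + shift_cint b G2 x).
Proof.
move=> ib m1 m2; apply: funext => x; rewrite /shift_cint -cintD.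
- by congr cint; apply: funext => t; rewrite mulrDr.
- exact/cintegrableM/cbmeasurable_addT.
- exact/cintegrableM/cbmeasurable_addT.
Qed.

Lemma shift_cintZ b c G : cintegrable (a_meas b) (a_dens b) -> cbmeasurable G ->
  shift_cint b (fun s => c * G s) = (fun x => c * shift_cint b G x).
Proof.
move=> ib mG; apply: funext => x; rewrite /shift_cint -cintZ.
- by congr cint; apply: funext => t; rewrite mulrCA.
- exact/cintegrableM/cbmeasurable_addT.
Qed.

Lemma atom_conv_cintD a b G1 G2 :
  cintegrable (a_meas a) (a_dens a) -> cintegrable (a_meas b) (a_dens b) ->
  cbmeasurable G1 -> cbmeasurable G2 ->
  atom_conv_cint a b (fun s => G1 s + G2 s) =
    atom_conv_cint a b G1 + atom_conv_cint a b G2.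
Proof.
move=> ia ib m1 m2; rewrite /atom_conv_cint shift_cintD // -cintD.
- by congr cint; apply: funext => t; rewrite mulrDr.
- exact/cintegrableM/cbmeasurable_shift_cint.
- exact/cintegrableM/cbmeasurable_shift_cint.
Qed.

Lemma atom_conv_cintZ a b c G :
  cintegrable (a_meas a) (a_dens a) -> cintegrable (a_meas b) (a_dens b) ->
  cbmeasurable G -> atom_conv_cint a b (fun s => c * G s) = c * atom_conv_cint a b G.
Proof.
move=> ia ib mG; rewrite /atom_conv_cint shift_cintZ // -cintZ.
- by congr cint; apply: funext => t; rewrite mulrCA.
- exact/cintegrableM/cbmeasurable_shift_cint.
Qed.

Lemma big_wf_eq X (F G : atom R -> C) : cm_wf X ->
  (forall a, atom_wf a -> F a = G a) -> \sum_(a <- X) F a = \sum_(a <- X) G a.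
Proof.
elim: X => [|a X IHX] /= => [_ _|[wa wX] FG]; first by rewrite !big_nil.
by rewrite !big_cons FG // IHX.
Qed.

Lemma big_wf_le X (F G : atom R -> R) : cm_wf X ->
  (forall a, atom_wf a -> F a <= G a) -> \sum_(a <- X) F a <= \sum_(a <- X) G a.
Proof.
elim: X => [|a X IHX] /= => [_ _|[wa wX] FG]; first by rewrite !big_nil.
by rewrite !big_cons; apply: lerD; [exact: FG|exact: IHX].
Qed.

Section WellFormed.
Variables X Y : cmeasure R.
Hypotheses (wX : cm_wf X) (wY : cm_wf Y).

Lemma conv_cintD G1 G2 : cbmeasurable G1 -> cbmeasurable G2 ->
  conv_cint X Y (fun s => G1 s + G2 s) = conv_cint X Y G1 + conv_cint X Y G2.
Proof.
move=> m1 m2; rewrite /conv_cint -big_split; apply: big_wf_eq => // a wa.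
rewrite -big_split; apply: big_wf_eq => // b wb.
by apply: atom_conv_cintD => //; exact: atom_cintegrable.
Qed.

Lemma conv_cintZ c G : cbmeasurable G ->
  conv_cint X Y (fun s => c * G s) = c * conv_cint X Y G.
Proof.
move=> mG; rewrite /conv_cint mulr_sumr; apply: big_wf_eq => // a wa.
rewrite mulr_sumr; apply: big_wf_eq => // b wb.
by apply: atom_conv_cintZ => //; exact: atom_cintegrable.
Qed.

Lemma conv_cint0 : conv_cint X Y (fun _ => 0) = 0.
Proof.
have -> : (fun _ : R => 0 : C) = fun _ => 0 * 1 by apply: funext => _; rewrite mul0r.
by rewrite conv_cintZ ?mul0r //; exact: cbmeasurable_cst.
Qed.

Lemma conv_cint_sum (K : nat) (F : nat -> R -> C) : (forall j, cbmeasurable (F j)) ->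
  conv_cint X Y (fun s => \sum_(0 <= j < K) F j s) =
    \sum_(0 <= j < K) conv_cint X Y (F j).
Proof.
move=> mF; elim: K => [|K IHK].
  by under eq_fun do rewrite big_nil; rewrite conv_cint0 big_nil.
under eq_fun do rewrite big_nat_recr //=.
by rewrite conv_cintD ?IHK ?big_nat_recr //; exact: cbmeasurable_sum.
Qed.

Lemma conv_cint_bound G M : cbmeasurable G -> cbounded G M ->
  cbounded (fun=> conv_cint X Y G) (M * conv_mass X Y).
Proof.
move=> mG bG _; rewrite /conv_cint /conv_mass !mulr_sumr Re_sum Im_sum.
have bnd a b : atom_wf a -> atom_wf b -> cbounded (fun=> atom_conv_cint a b G)
    (M * (cnorm1 (a_meas b) (a_dens b) * cnorm1 (a_meas a) (a_dens a))).
  move=> /atom_cintegrable ia /atom_cintegrable ib; rewrite mulrA.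
  exact: cint_bound ia (cbmeasurable_shift_cint ib mG) (shift_cint_bound ib mG bG).
split; apply: le_trans (ler_norm_sum _ _ _) _; apply: big_wf_le => // a wa;
  rewrite ?Re_sum ?Im_sum mulr_sumr; apply: le_trans (ler_norm_sum _ _ _) _;
  apply: big_wf_le => // b wb; by case: (bnd a b wa wb 0).
Qed.

Lemma conv_mass_ge0 : 0 <= conv_mass X Y.
Proof.
by apply: sumr_ge0 => a _; apply: sumr_ge0 => b _; apply: mulr_ge0; exact: cnorm1_ge0.
Qed.

End WellFormed.

End ConvolutionIntegral.

Section Extension.
Variable R : realType.
Local Notation C := R[i].
Local Notation Re := (@complex.Re R).
Local Notation Im := (@complex.Im R).

Lemma measurable_set_ge (g : R -> R) (c : R) : measurable_fun setT g ->
  measurable [set s | c <= g s].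
Proof.
move=> mg; have := mg measurableT _ (measurable_itv `[c, +oo[).
rewrite setTI; congr measurable; apply/seteqP; split => s /=;
  by rewrite in_itv /= andbT.
Qed.

Definition step_sum (d y : R) (K : nat) : R :=
  \sum_(0 <= j < K) d * ((j.+1%:R * d <= y)%R : bool)%:R.

Lemma step_sum_full (d y : R) (K : nat) : 0 < d -> K%:R * d <= y ->
  step_sum d y K = K%:R * d.
Proof.
move=> d0; elim: K => [|K IHK] Ky; first by rewrite /step_sum big_nil mul0r.
rewrite /step_sum big_nat_recr //= -/(step_sum _ _ _) IHK; last first.
  by apply: le_trans Ky; rewrite ler_pM2r // ler_nat.
by rewrite Ky mulr1 -addn1 natrD mulrDl mul1r.
Qed.

Lemma step_sum_bounds (d y : R) (K : nat) : 0 < d -> 0 <= y -> y <= K%:R * d ->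
  y - d < step_sum d y K <= y.
Proof.
move=> d0 y0; elim: K => [|K IHK] yK.
  have -> : y = 0 by apply: le_anti; rewrite y0 andbT -(mul0r d).
  by rewrite /step_sum big_nil sub0r oppr_lt0 d0 lexx.
rewrite /step_sum big_nat_recr //= -/(step_sum _ _ _).
have [yK'|Ky] := leP y (K%:R * d).
  have -> : (K.+1%:R * d <= y) = false.
    by apply/negbTE; rewrite -ltNge; apply: le_lt_trans yK' _; rewrite ltr_pM2r // ltr_nat.
  by rewrite mulr0 addr0; exact: IHK.
rewrite step_sum_full //; last exact: ltW.
have [h|h] := leP (K.+1%:R * d) y; rewrite /= ?mulr1 ?mulr0;
  move: h yK; rewrite -addn1 natrD mulrDl mul1r => h yK; apply/andP; split; lra.
Qed.

Definition step_approx (g : R -> R) (M d : R) (K : nat) (s : R) : R :=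
  - M + step_sum d (g s + M) K.

Lemma step_approx_indic (g : R -> R) (M d : R) (K : nat) :
  (fun s => (step_approx g M d K s)%:C) = fun s => (- M)%:C * cindic setT s +
    \sum_(0 <= j < K) d%:C * cindic [set s | j.+1%:R * d - M <= g s] s.
Proof.
apply: funext => s; rewrite /step_approx /step_sum /cindic in_setT rmorphD.
rewrite rmorph_sum /= mulr1; congr (_ + _); apply: eq_bigr => j _.
rewrite rmorphM /= rmorph_nat; congr (_ * (_ : bool)%:R).
by apply/idP/idP => [h|/set_mem]; [apply: mem_set|]; rewrite /= lerBlDr.
Qed.

Lemma cbmeasurable_step_approx (g : R -> R) (M d : R) (K : nat) :
  measurable_fun setT g -> cbmeasurable (fun s => (step_approx g M d K s)%:C).
Proof.
move=> mg; rewrite step_approx_indic.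
have mI A : measurable A -> cbmeasurable (fun s => (d%:C) * cindic A s).
  by move=> mA; apply: cbmeasurableM; [exact: cbmeasurable_cst|exact: cbmeasurable_indic].
apply: cbmeasurableD; last by apply: cbmeasurable_sum => j; exact: mI (measurable_set_ge _ mg).
by apply: cbmeasurableM; [exact: cbmeasurable_cst|exact: cbmeasurable_indic].
Qed.

Lemma step_approx_close (g : R -> R) (M d : R) (K : nat) (s : R) : 0 < d ->
  `|g s| <= M -> 2 * M <= K%:R * d -> g s - d < step_approx g M d K s <= g s.
Proof.
move=> d0; rewrite ler_norml => /andP[gl gr] KM.
have /andP[? ?] : g s + M - d < step_sum d (g s + M) K <= g s + M.
  by apply: step_sum_bounds => //; lra.
by rewrite /step_approx; apply/andP; split; lra.
Qed.

Lemma Re_subC (x : C) (y : R) : Re (x - y%:C) = Re x - y.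
Proof. by case: x => a b. Qed.

Lemma Im_subC (x : C) (y : R) : Im (x - y%:C) = Im x.
Proof. by case: x => a b /=; rewrite subr0. Qed.

Lemma norm_le_pos_eq0 (x : R) : (forall e, 0 < e -> `|x| <= e) -> x = 0.
Proof.
move=> xe; apply/eqP; rewrite -normr_le0; apply/ler_addgt0Pr => e /xe.
by rewrite add0r.
Qed.

Section AgreesWithDirac.
Variables X Y : cmeasure R.
Hypotheses (wX : cm_wf X) (wY : cm_wf Y).
Hypothesis conv_indic : forall A, measurable A -> conv_cint X Y (cindic A) = cindic A 0.

Lemma conv_cint_step_approx (g : R -> R) (M d : R) (K : nat) : measurable_fun setT g ->
  conv_cint X Y (fun s => (step_approx g M d K s)%:C) = (step_approx g M d K 0)%:C.
Proof.
move=> mg; have E := step_approx_indic g M d K.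
rewrite [RHS](congr1 (fun f => f 0) E) E /=.
have mI A : measurable A -> cbmeasurable (fun s => (d%:C) * cindic A s).
  by move=> mA; apply: cbmeasurableM; [exact: cbmeasurable_cst|exact: cbmeasurable_indic].
rewrite conv_cintD //; first last.
- by apply: cbmeasurable_sum => j; exact: mI (measurable_set_ge _ mg).
- by apply: cbmeasurableM; [exact: cbmeasurable_cst|exact: cbmeasurable_indic].
rewrite conv_cintZ ?conv_indic //; last exact: cbmeasurable_indic.
rewrite conv_cint_sum //; last by move=> j; exact: mI (measurable_set_ge _ mg).
congr (_ + _); apply: eq_bigr => j _.
have mB := measurable_set_ge (j.+1%:R * d - M) mg.
by rewrite conv_cintZ ?conv_indic //; exact: cbmeasurable_indic.
Qed.

Lemma conv_cint_close G H (d : R) : cbmeasurable G -> cbmeasurable H ->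
  cbounded (fun s => G s - H s) d ->
  cbounded (fun=> conv_cint X Y G - conv_cint X Y H) (d * conv_mass X Y).
Proof.
move=> mG mH bGH; have mGH : cbmeasurable (fun s => G s - H s).
  under eq_fun do rewrite -mulN1r.
  exact/cbmeasurableD/(cbmeasurableM (cbmeasurable_cst _) mH).
have -> : conv_cint X Y G = conv_cint X Y (fun s => (G s - H s) + H s).
  by congr conv_cint; apply: funext => s; rewrite subrK.
by rewrite conv_cintD // addrK; exact: conv_cint_bound wX wY _ _ mGH bGH.
Qed.

Lemma conv_cint_real (g : R -> R) (M : R) : measurable_fun setT g ->
  (forall s, `|g s| <= M) -> conv_cint X Y (fun s => (g s)%:C) = (g 0)%:C.
Proof.
move=> mg gM; have M0 : 0 <= M by apply: le_trans (gM 0).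
suff close e : 0 < e ->
    `|Re (conv_cint X Y (fun s => (g s)%:C)) - g 0| <= e /\
    `|Im (conv_cint X Y (fun s => (g s)%:C))| <= e.
  have /eqP := norm_le_pos_eq0 (fun e e0 => (close e e0).1).
  rewrite subr_eq0 => /eqP; have := norm_le_pos_eq0 (fun e e0 => (close e e0).2).
  by case: conv_cint => a b /= -> ->.
move=> e0; have KL0 := conv_mass_ge0 X Y.
pose d := e / (conv_mass X Y + 1).
have d0 : 0 < d by rewrite divr_gt0 // ltr_wpDl.
have de : d * conv_mass X Y + d = e.
  by rewrite -{2}[d]mulr1 -mulrDr /d divfK // gt_eqF // ltr_wpDl.
pose K := Num.Def.archi_bound (2 * M / d).
have KM : 2 * M <= K%:R * d.
  have h0 : 0 <= 2 * M / d by apply: divr_ge0; [apply: mulr_ge0|exact: ltW].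
  by have := archi_boundP h0; rewrite ltr_pdivrMr // => /ltW.
pose S := step_approx g M d K.
have Sg s : g s - d < S s <= g s by exact: step_approx_close.
have gS : cbounded (fun s => (g s)%:C - (S s)%:C) d.
  move=> s; rewrite -rmorphB /= normr0 (ltW d0); split => //.
  by have /andP[? ?] := Sg s; rewrite ler_norml; apply/andP; split; lra.
have [b1 b2] := conv_cint_close (cbmeasurable_real mg gM)
  (cbmeasurable_step_approx M d K mg) gS 0.
rewrite conv_cint_step_approx // Re_subC Im_subC in b1 b2.
split; last by apply: le_trans b2 _; rewrite -de lerDl ltW.
rewrite -de; apply: le_trans (ler_distD (S 0) _ _) _; apply: lerD => //.
by have /andP[? ?] := Sg 0; rewrite ler_norml; apply/andP; split; lra.
Qed.

Lemma conv_cint_dirac G : cbmeasurable G -> conv_cint X Y G = G 0.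
Proof.
move=> mG; have [m1 m2 [M GM]] := mG.
have mRe := cbmeasurable_real m1 (fun s => (GM s).1).
have mIm := cbmeasurable_real m2 (fun s => (GM s).2).
rewrite (_ : G = fun s => (Re (G s))%:C + 'i * (Im (G s))%:C); last first.
  by apply: funext => s; rewrite -complexE.
rewrite conv_cintD //; last by apply: cbmeasurableM => //; exact: cbmeasurable_cst.
rewrite conv_cintZ // (conv_cint_real m1 (fun s => (GM s).1)).
by rewrite (conv_cint_real m2 (fun s => (GM s).2)) -complexE.
Qed.

End AgreesWithDirac.

End Extension.

Section TwistSpectrum.
Variable R : realType.
Local Notation C := R[i].
Implicit Types (mu nu X Y : cmeasure R) (a b : atom R) (G : R -> C).

Definition echar (m : int) (s : R) : C := expi (m%:~R * s).

Definition Tm_atom m a := Atom (a_meas a) (fun t => echar m t * a_dens a t).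

Lemma TmE m X : Tm m X = map (Tm_atom m) X.
Proof. by []. Qed.

Lemma cbmeasurable_echar m : cbmeasurable (echar m).
Proof.
have mm : measurable_fun setT (fun s : R => m%:~R * s).
  by apply: measurable_funM; [exact: measurable_cst|exact: measurable_id].
split.
- exact: measurableT_comp (continuous_measurable_fun (@continuous_cos R)) mm.
- exact: measurableT_comp (continuous_measurable_fun (@continuous_sin R)) mm.
- by exists 1 => s; split; [exact: cos_max|exact: sin_max].
Qed.

Lemma cm_wf_cat X Y : cm_wf (X ++ Y) <-> cm_wf X /\ cm_wf Y.
Proof. by elim: X => [|a X IHX] /=; [tauto|rewrite IHX; tauto]. Qed.

Lemma cm_wf_Tm m X : cm_wf X -> cm_wf (Tm m X).
Proof.
elim: X => [|a X IHX] //= [[c0 i1 i2] wX]; split; last exact: IHX.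
have [] : cintegrable (a_meas a) (fun t => echar m t * a_dens a t).
  under eq_fun do rewrite mulrC.
  exact: cintegrableM (cbmeasurable_echar m).
by split.
Qed.

Lemma cm_wf_scale_delta0 (c : C) : cm_wf (cm_scale c (delta0 R)).
Proof.
split => //; split.
- by rewrite /= diracE memNset //= in_itv /= lexx /= mulr_gt0 // pi_gt0.
- exact: (eq_integrable measurableT _ _ _
    (finite_measure_integrable_cst _ (complex.Re (c * 1)) measurableT)).
- exact: (eq_integrable measurableT _ _ _
    (finite_measure_integrable_cst _ (complex.Im (c * 1)) measurableT)).
Qed.

Lemma cm_val_delta0 (A : set R) : measurable A -> cm_val (delta0 R) A = cindic A 0.
Proof.
move=> mA; rewrite /cm_val big_cons big_nil addr0 /=.
have -> : (fun x => 1 * (x \in A)%:R) = cindic A by apply: funext => x; rewrite mul1r.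
by rewrite cint_dirac //; exact: cbmeasurable_indic.
Qed.

Lemma shift_cint_Tm m b G x : cintegrable (a_meas b) (a_dens b) -> cbmeasurable G ->
  shift_cint b (fun s => echar m s * G s) x = echar m x * shift_cint (Tm_atom m b) G x.
Proof.
move=> ib mG; rewrite /shift_cint /= -cintZ; last first.
  have -> : (fun t => echar m t * a_dens b t * G (addT x t)) =
      fun t => a_dens b t * (echar m t * G (addT x t)).
    by apply: funext => t; rewrite mulrCA mulrA.
  apply: cintegrableM ib _; apply: cbmeasurableM (cbmeasurable_echar m) _.
  exact: cbmeasurable_addT.
congr cint; apply: funext => t; rewrite /echar expi_addT; ring.
Qed.

Lemma atom_conv_cint_Tm m a b G : cintegrable (a_meas b) (a_dens b) ->
  cbmeasurable G ->
  atom_conv_cint (Tm_atom m a) (Tm_atom m b) G =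
    atom_conv_cint a b (fun s => echar m s * G s).
Proof.
move=> ib mG; rewrite /atom_conv_cint /=; congr cint; apply: funext => x.
by rewrite shift_cint_Tm //; ring.
Qed.

Lemma conv_val_Tm m X Y A : cm_wf Y -> measurable A ->
  conv_val (Tm m X) (Tm m Y) A = conv_cint X Y (fun s => echar m s * cindic A s).
Proof.
move=> wY mA; rewrite -[LHS]/(conv_cint _ _ (cindic A)) /conv_cint !TmE big_map.
apply: eq_bigr => a _; rewrite big_map; apply: big_wf_eq => // b wb.
by rewrite atom_conv_cint_Tm //; [exact: atom_cintegrable|exact: cbmeasurable_indic].
Qed.

Lemma conv_val_Tm_delta0 m X Y : cm_wf X -> cm_wf Y ->
  (forall A, measurable A -> conv_val X Y A = cm_val (delta0 R) A) ->
  forall A, measurable A -> conv_val (Tm m X) (Tm m Y) A = cm_val (delta0 R) A.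
Proof.
move=> wX wY XY A mA; rewrite conv_val_Tm // conv_cint_dirac //.
- by rewrite cm_val_delta0 // /echar mulr0 expi0 mul1r.
- by move=> B mB; rewrite -[LHS]/(conv_val X Y B) XY //; exact: cm_val_delta0.
- by apply: cbmeasurableM; [exact: cbmeasurable_echar|exact: cbmeasurable_indic].
Qed.

Lemma conv_val_Tm_scale_delta0 m (c : C) Y A : cm_wf Y -> measurable A ->
  conv_val (Tm m (cm_scale c (delta0 R))) Y A = conv_val (cm_scale c (delta0 R)) Y A.
Proof.
move=> wY mA; rewrite /conv_val /= !big_cons !big_nil !addr0.
apply: big_wf_eq => // b wb.
have mS : cbmeasurable (shift_cint b (cindic A)).
  by apply: cbmeasurable_shift_cint; [exact: atom_cintegrable|exact: cbmeasurable_indic].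
rewrite -[LHS]/(cint _ (fun x => _ * shift_cint b (cindic A) x)).
rewrite -[RHS]/(cint _ (fun x => _ * shift_cint b (cindic A) x)).
rewrite !cint_dirac /=.
- by rewrite mulr0 expi0 mul1r.
- exact: cbmeasurableM (cbmeasurable_cst _) mS.
- apply: cbmeasurableM mS; apply: cbmeasurableM (cbmeasurable_echar m) _.
  exact: cbmeasurable_cst.
Qed.

Lemma cm_invertible_Tm m mu (lam : C) : cm_wf mu ->
  cm_invertible (mu ++ cm_scale (- lam) (delta0 R)) ->
  cm_invertible (Tm m mu ++ cm_scale (- lam) (delta0 R)).
Proof.
move=> wmu [nu [wnu munu]]; exists (Tm m nu); split; first exact: cm_wf_Tm.
move=> A mA; have wS := cm_wf_scale_delta0 (- lam).
rewrite /conv_val big_cat -/(conv_val _ _ A) -/(conv_val _ _ A).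
rewrite -(conv_val_Tm_scale_delta0 m) //; last exact: cm_wf_Tm.
rewrite /conv_val -big_cat -/(conv_val _ _ A) -Tm_cat.
by apply: conv_val_Tm_delta0 => //; exact/cm_wf_cat.
Qed.

Lemma spectrum_Tm m mu : cm_wf mu -> spectrum (Tm m mu) = spectrum mu.
Proof.
move=> wmu; apply/seteqP; split => lam /= notinv inv; apply: notinv.
- exact: cm_invertible_Tm.
- by have := cm_invertible_Tm (- m) (cm_wf_Tm m wmu) inv; rewrite TmK.
Qed.

Lemma inN_Tm m mu : cm_wf mu -> inN (Tm m mu) <-> inN mu.
Proof. by move=> wmu; rewrite /inN spectrum_Tm // range_fourier_Tm. Qed.

End TwistSpectrum.

Theorem mainTheorem17 (R : realType) (mu : cmeasure R) :
  cm_wf mu ->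
  (spectrally_reasonable mu <-> forall m : int, spectrally_reasonable (Tm m mu)).
Proof.
move=> wmu; split=> [SRmu m nu wnu Nnu | /(_ 0)]; last by rewrite Tm0.
have wnu' : cm_wf (Tm (- m) nu) by exact: cm_wf_Tm.
have /(SRmu _ wnu') : inN (Tm (- m) nu) by exact/inN_Tm.
by rewrite -(inN_Tm m) ?Tm_cat ?TmNK //; exact/cm_wf_cat.
Qed.
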